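(* An integral domain $D$ is a $\ast$-wf-SH domain if and only if $D$ is a $\ast$-SH domain with trivial $\ast$-class group $Cl_\ast(D)=0$.
   Context: $\ast$ is a star operation on $D$ of finite character. A $\ast$-ideal is a nonzero fractional ideal $I$ with $I^\ast=I$; of finite type if $I=J^\ast$ for some nonzero finitely generated $J$. $I$ is $\ast$-invertible if $(II^{-1})^\ast=D$. $Cl_\ast(D)$ is the group of $\ast$-invertible fractional $\ast$-ideals under $(I,J)\mapsto (IJ)^\ast$ modulo the subgroup of nonzero principal fractional ideals. A $\ast$-homog ideal is a proper integral $\ast$-ideal $I$ of finite type such that $(A+B)^\ast\neq D$ for every pair $A,B$ of proper integral $\ast$-ideals of finite type containing $I$. $D$ is a $\ast$-SH domain if for every nonzero nonunit $x$, $xD$ is a $\ast$-product $(I_1\cdots I_n)^\ast$ of finitely many $\ast$-homog ideals. A $\ast$-wf-homog ideal is a $\ast$-homog ideal $I$ such that, if $I$ is $\ast$-invertible, then every $\ast$-invertible $\ast$-ideal containing $I$ is principal; a $\ast$-wf-homog element is a generator of a principal $\ast$-wf-homog ideal. $D$ is a $\ast$-wf-SH domain if every nonzero nonunit of $D$ is a finite product of $\ast$-wf-homog elements. *)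

From HB Require Import structures.
From mathcomp Require Import all_boot all_order all_algebra.
Set Implicit Arguments.
Unset Strict Implicit.
Unset Printing Implicit Defensive.
Import GRing.Theory.
Local Open Scope ring_scope.

(* The integral domain D is modelled by R : idomainType; its quotient field is
   K = {fraction R}, and D is identified with its image under r |-> r%:F. *)

Section StarDefs.
Variable R : idomainType.
Local Notation K := {fraction R}.
Definition emb (r : R) : K := FracField.tofrac r.

Definition kset := K -> Prop.

Definition subs (I J : kset) : Prop := forall x, I x -> J x.
Definition seteq (I J : kset) : Prop := forall x, I x <-> J x.

Definition Dset : kset := fun y => exists r : R, y = emb r.

Definition frac_ideal (I : kset) : Prop :=
  [/\ (exists x, I x /\ x != 0),
      I 0,
      (forall x y, I x -> I y -> I (x + y)),
      (forall (r : R) x, I x -> I (emb r * x)) &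
      (exists d : R, d != 0 /\ forall x, I x -> Dset (emb d * x))].

Definition pid (x : K) : kset := fun y => exists r : R, y = emb r * x.

Definition scale (x : K) (I : kset) : kset := fun y => exists z, I z /\ y = x * z.

Definition gen (s : seq K) : kset :=
  fun y => exists c : 'I_(size s) -> R, y = \sum_(i < size s) emb (c i) * s`_i.

Definition nz_fg (J : kset) : Prop :=
  exists s : seq K, has (fun x => x != 0) s /\ seteq J (gen s).

Definition prod (I J : kset) : kset :=
  fun y => exists n (a b : 'I_n -> K),
    (forall i, I (a i)) /\ (forall i, J (b i)) /\ y = \sum_(i < n) a i * b i.

Definition sum (I J : kset) : kset :=
  fun y => exists a b, I a /\ J b /\ y = a + b.

Definition finv (I : kset) : kset := fun x => forall y, I y -> Dset (x * y).

Definition prodl (l : seq kset) : kset := foldr prod Dset l.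

Definition star_operation (st : kset -> kset) : Prop :=
  (forall I J, frac_ideal I -> seteq I J -> seteq (st I) (st J)) /\
      (forall I, frac_ideal I -> frac_ideal (st I)) /\
      (forall x, x != 0 -> seteq (st (pid x)) (pid x)) /\
      (forall x I, x != 0 -> frac_ideal I -> seteq (st (scale x I)) (scale x (st I))) /\
      (forall I, frac_ideal I -> subs I (st I)) /\
      (forall I J, frac_ideal I -> frac_ideal J -> subs I J -> subs (st I) (st J)) /\
      (forall I, frac_ideal I -> seteq (st (st I)) (st I)).

Definition finite_character (st : kset -> kset) : Prop :=
  forall I, frac_ideal I ->
    seteq (st I) (fun y => exists J, nz_fg J /\ subs J I /\ st J y).

Variable st : kset -> kset.

Fixpoint allP {T : Type} (P : T -> Prop) (l : seq T) : Prop :=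
  if l is a :: l' then P a /\ allP P l' else True.


Definition star_ideal (I : kset) : Prop := frac_ideal I /\ seteq (st I) I.

Definition finite_type (I : kset) : Prop :=
  star_ideal I /\ exists J, nz_fg J /\ seteq I (st J).

Definition star_invertible (I : kset) : Prop :=
  frac_ideal I /\ seteq (st (prod I (finv I))) Dset.

Definition integral (I : kset) : Prop := subs I Dset.
Definition proper (I : kset) : Prop := ~ I 1.

Definition principal (I : kset) : Prop := exists x : K, x != 0 /\ seteq I (pid x).

(* Cl_*(D) = 0: every *-invertible fractional *-ideal lies in the subgroup of
   nonzero principal fractional ideals. *)
Definition trivial_star_class_group : Prop :=
  forall I, star_ideal I -> star_invertible I -> principal I.

Definition pifst (A : kset) : Prop :=
  proper A /\ integral A /\ finite_type A.

Definition star_homog (I : kset) : Prop :=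
  pifst I /\
  forall A B, pifst A -> pifst B -> subs I A -> subs I B ->
    ~ seteq (st (sum A B)) Dset.

Definition star_SH : Prop :=
  forall x : R, x != 0 -> x \isn't a GRing.unit ->
    exists l : seq kset, allP star_homog l /\ seteq (pid (emb x)) (st (prodl l)).

Definition star_wf_homog (I : kset) : Prop :=
  star_homog I /\
  (star_invertible I ->
     forall J, star_ideal J -> star_invertible J -> subs I J -> principal J).

Definition star_wf_homog_elt (x : R) : Prop := star_wf_homog (pid (emb x)).

Definition star_wf_SH : Prop :=
  forall x : R, x != 0 -> x \isn't a GRing.unit ->
    exists l : seq R, allP star_wf_homog_elt l /\ x = \prod_(y <- l) y.

End StarDefs.

(* For the forward direction, a *-invertible *-ideal I contains
   a nonzero nonunit b (unless D is a field); in a factorization b = y p into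
   *-wf-homog elements, p^-1 I is a *-invertible *-ideal containing the
   *-invertible ideal yD, hence principal by the wf condition on y.
   Conversely, if xD = (I_1 ... I_n)^* with *-homog I_i, every I_i is
   *-invertible, because I_i times the remaining factors has principal
   *-closure; when Cl_*(D) = 0 each I_i = y_i D with y_i in D, so x is an
   associate of y_1 ... y_n, and absorbing the unit into y_1 gives a product
   of *-wf-homog elements, the wf condition being exactly Cl_*(D) = 0. *)

From Pilot Require Import Defs.
From HB Require Import structures.
From mathcomp Require Import all_boot all_order all_algebra.
From Stdlib Require Import Classical.
Set Implicit Arguments.
Unset Strict Implicit.
Unset Printing Implicit Defensive.
Import GRing.Theory.
Local Open Scope ring_scope.

Lemma tofrac_clear_denom (R : idomainType) (k : {fraction R}) :
  exists u v : R, v != 0 /\ FracField.tofrac v * k = FracField.tofrac u.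
Proof.
elim/quotW: k => x.
exists (\n_x), (\d_x); split; first exact: denom_ratioP.
rewrite /FracField.tofrac -lock -[_ * _]/(FracField.mul _ _) -FracField.pi_mul.
apply/eqmodP; rewrite /= FracField.equivfE /FracField.mulf.
by rewrite !numden_Ratio ?mulf_neq0 ?denom_ratioP ?oner_neq0 // mul1r mulr1 mulrC.
Qed.

Lemma allP_sub (T : Type) (P Q : T -> Prop) (l : seq T) :
  (forall a, P a -> Q a) -> Defs.allP P l -> Defs.allP Q l.
Proof. by move=> PQ; elim: l => [//|a l IH] /= [Pa Pl]; split; [exact: PQ | exact: IH]. Qed.

Section FractionalIdeals.
Variable R : idomainType.
Local Notation K := {fraction R}.
Local Notation emb := (@emb R).
Local Notation Dset := (@Dset R).
Implicit Types (I J L : kset R) (x c : K).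

Lemma embD a b : emb (a + b) = emb a + emb b. Proof. exact: rmorphD. Qed.
Lemma embM a b : emb (a * b) = emb a * emb b. Proof. exact: rmorphM. Qed.
Lemma emb1 : emb 1 = 1. Proof. exact: rmorph1. Qed.
Lemma emb0 : emb 0 = 0. Proof. exact: rmorph0. Qed.
Lemma emb_eq0 a : (emb a == 0) = (a == 0). Proof. exact: tofrac_eq0. Qed.
Lemma emb_inj : injective emb.
Proof. by move=> a b /eqP; rewrite /Defs.emb tofrac_eq => /eqP. Qed.

Lemma D_emb r : Dset (emb r). Proof. by exists r. Qed.
Lemma D_0 : Dset 0. Proof. by exists 0; rewrite emb0. Qed.
Lemma D_1 : Dset 1. Proof. by exists 1; rewrite emb1. Qed.
Lemma D_add x (y : K) : Dset x -> Dset y -> Dset (x + y).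
Proof. by move=> [r ->] [s ->]; exists (r + s); rewrite embD. Qed.
Lemma D_mul x (y : K) : Dset x -> Dset y -> Dset (x * y).
Proof. by move=> [r ->] [s ->]; exists (r * s); rewrite embM. Qed.

Lemma seteq_refl I : seteq I I. Proof. by []. Qed.
Lemma seteq_sym I J : seteq I J -> seteq J I.
Proof. by move=> H x; split => /H. Qed.
Lemma seteq_trans I J L : seteq I J -> seteq J L -> seteq I L.
Proof. by move=> H1 H2 x; split => [/H1/H2|/H2/H1]. Qed.
Lemma seteq_subs I J : seteq I J -> subs I J.
Proof. by move=> H x /H. Qed.
Lemma subs_antisym I J : subs I J -> subs J I -> seteq I J.
Proof. by move=> H1 H2 x; split => [/H1|/H2]. Qed.

Lemma prod_mem I J x (y : K) : I x -> J y -> prod I J (x * y).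
Proof.
by move=> Hx Hy; exists 1%N, (fun _ => x), (fun _ => y); rewrite big_ord1.
Qed.

Lemma prod_0 I J : prod I J 0.
Proof.
by exists 0%N, (fun _ => 0), (fun _ => 0); rewrite big_ord0; do 2 (split; first by case).
Qed.

Lemma prod_add I J x (y : K) : prod I J x -> prod I J y -> prod I J (x + y).
Proof.
move=> [n [a [b [Ha [Hb ->]]]]] [m [a' [b' [Ha' [Hb' ->]]]]].
exists (n + m)%N, (fun i => match split i with inl j => a j | inr j => a' j end),
  (fun i => match split i with inl j => b j | inr j => b' j end).
split; first by move=> i; case: (split i).
split; first by move=> i; case: (split i).
rewrite big_split_ord /=; congr (_ + _); apply: eq_bigr => i _.
  by have /= -> := unsplitK (inl _ i : 'I_n + 'I_m).
by have /= -> := unsplitK (inr _ i : 'I_n + 'I_m).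
Qed.

Lemma prod_min I J (S : kset R) : S 0 -> (forall x y, S x -> S y -> S (x + y)) ->
  (forall x y, I x -> J y -> S (x * y)) -> subs (prod I J) S.
Proof.
move=> S0 SD SM z [n [a [b [Ha [Hb ->]]]]].
by apply: big_ind => // i _; apply: SM.
Qed.

Lemma prod_mono I J I' J' : subs I I' -> subs J J' -> subs (prod I J) (prod I' J').
Proof.
move=> H1 H2; apply: prod_min; [exact: prod_0 | exact: prod_add |].
by move=> x y /H1 Hx /H2 Hy; apply: prod_mem.
Qed.

Lemma prod_seteq I J I' J' : seteq I I' -> seteq J J' -> seteq (prod I J) (prod I' J').
Proof.
move=> H1 H2; apply: subs_antisym; apply: prod_mono; apply: seteq_subs => //;
  exact: seteq_sym.
Qed.

Lemma prodC I J : seteq (prod I J) (prod J I).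
Proof.
have H I' J' : subs (prod I' J') (prod J' I').
  apply: prod_min; [exact: prod_0 | exact: prod_add |].
  by move=> x y Hx Hy; rewrite mulrC; apply: prod_mem.
by apply: subs_antisym; apply: H.
Qed.

Lemma prodA I J L : seteq (prod I (prod J L)) (prod (prod I J) L).
Proof.
apply: subs_antisym; apply: prod_min; try exact: prod_0; try exact: prod_add.
  move=> x w Hx [n [b [c [Hb [Hc ->]]]]].
  exists n, (fun i => x * b i), c; split; first by move=> i; apply: prod_mem.
  by split => //; rewrite mulr_sumr; apply: eq_bigr => i _; rewrite mulrA.
move=> w c [n [a [b [Ha [Hb ->]]]]] Hc.
exists n, a, (fun i => b i * c); do 2 split => //; first by move=> i; apply: prod_mem.
by rewrite mulr_suml; apply: eq_bigr => i _; rewrite mulrA.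
Qed.

Lemma prodCA I J L : seteq (prod J (prod I L)) (prod I (prod J L)).
Proof.
apply: seteq_trans (prodA _ _ _) _.
apply: seteq_trans (seteq_sym (prodA _ _ _)).
exact: prod_seteq (prodC _ _) (seteq_refl _).
Qed.

Lemma prod_scaler I J c : seteq (prod I (scale c J)) (scale c (prod I J)).
Proof.
apply: subs_antisym.
  apply: prod_min.
  - by exists 0; split; [exact: prod_0 | rewrite mulr0].
  - move=> u v [p [Hp ->]] [q [Hq ->]]; exists (p + q).
    by split; [exact: prod_add | rewrite mulrDr].
  - move=> x y Hx [z [Hz ->]]; exists (x * z).
    by split; [exact: prod_mem | rewrite mulrCA].
move=> y [z [[n [a [b [Ha [Hb ->]]]]] ->]].
exists n, a, (fun i => c * b i); split => //; split; first by move=> i; exists (b i).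
by rewrite mulr_sumr; apply: eq_bigr => i _; rewrite mulrCA.
Qed.

Lemma prod_scalel I J c : seteq (prod (scale c I) J) (scale c (prod I J)).
Proof.
apply: seteq_trans (prodC _ _) _; apply: seteq_trans (prod_scaler _ _ _) _.
by move=> y; split => -[z [Hz ->]]; exists z; split => //; apply/prodC.
Qed.

Lemma D_pid1 : seteq Dset (pid 1).
Proof. by move=> y; split => -[r ->]; exists r; rewrite ?mulr1. Qed.

Lemma prod_pid x (y : K) : seteq (prod (pid x) (pid y)) (pid (x * y)).
Proof.
apply: subs_antisym.
  apply: prod_min.
  - by exists 0; rewrite emb0 mul0r.
  - by move=> u v [r ->] [s ->]; exists (r + s); rewrite embD mulrDl.
  - by move=> u v [r ->] [s ->]; exists (r * s); rewrite embM mulrACA.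
move=> z [r ->]; rewrite mulrA; apply: prod_mem; first by exists r.
by exists 1; rewrite emb1 mul1r.
Qed.

Lemma prodl_pid (l : seq R) :
  seteq (prodl (map (fun y => pid (emb y)) l)) (pid (emb (\prod_(y <- l) y))).
Proof.
elim: l => [|y l IH] /=; first by rewrite big_nil emb1; exact: D_pid1.
apply: seteq_trans (prod_seteq (seteq_refl _) IH) _.
by rewrite big_cons embM; exact: prod_pid.
Qed.

Lemma prod_D I : frac_ideal I -> seteq (prod Dset I) I.
Proof.
move=> [_ I0 ID IM _]; apply: subs_antisym.
  by apply: prod_min => // x y [r ->] Hy; apply: IM.
by move=> y Hy; rewrite -[y]mul1r; apply: prod_mem => //; exact: D_1.
Qed.

Lemma scale_seteq c I J : seteq I J -> seteq (scale c I) (scale c J).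
Proof. by move=> H y; split => -[z [/H Hz ->]]; exists z. Qed.

Lemma scale_scale c c' I : seteq (scale c (scale c' I)) (scale (c * c') I).
Proof.
move=> y; split; first by move=> [z [[w [Hw ->]] ->]]; exists w; rewrite mulrA.
by move=> [w [Hw ->]]; exists (c' * w); split; [exists w | rewrite mulrA].
Qed.

Lemma scale1 I : seteq (scale 1 I) I.
Proof.
by move=> y; split => [[z [Hz ->]]|Hy]; [rewrite mul1r | exists y; rewrite mul1r].
Qed.

Lemma scaleK c I : c != 0 -> seteq (scale c^-1 (scale c I)) I.
Proof.
move=> c0; apply: seteq_trans (scale_scale _ _ _) _.
by rewrite mulVf //; exact: scale1.
Qed.

Lemma scale_pid c x : seteq (scale c (pid x)) (pid (c * x)).
Proof.
move=> y; split; first by move=> [z [[r ->] ->]]; exists r; rewrite mulrCA.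
by move=> [r ->]; exists (emb r * x); split; [exists r | rewrite mulrCA].
Qed.

Lemma finv_scale c I : c != 0 -> seteq (Defs.finv (scale c I)) (scale c^-1 (Defs.finv I)).
Proof.
move=> c0 y; split.
  move=> Hy; exists (y * c); split; last by rewrite mulrC mulfK.
  by move=> z Hz; rewrite -mulrA; apply: Hy; exists z.
move=> [f [Hf ->]] w [z [Hz ->]]; rewrite mulrACA mulVf // mul1r.
exact: Hf.
Qed.

Lemma finv_pid x : x != 0 -> seteq (Defs.finv (pid x)) (pid x^-1).
Proof.
move=> x0 y; split.
  move=> Hy; have [s Hs] : Dset (y * x) by apply: Hy; exists 1; rewrite emb1 mul1r.
  by exists s; rewrite -Hs mulfK.
move=> [s ->] z [r ->]; rewrite mulrACA mulVf // mulr1.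
exact/D_mul/D_emb/D_emb.
Qed.

Lemma prod_finv_subD I : subs (prod I (Defs.finv I)) Dset.
Proof.
apply: prod_min; [exact: D_0 | exact: D_add |].
by move=> x y Hx Hy; rewrite mulrC; apply: Hy.
Qed.

Lemma frac_seteq I J : frac_ideal I -> seteq I J -> frac_ideal J.
Proof.
move=> [[x [Hx x0]] I0 ID IM [d [d0 Hd]]] H; split.
- by exists x; split => //; apply/H.
- exact/H.
- by move=> x1 y1 /H Hx1 /H Hy1; apply/H; apply: ID.
- by move=> r x1 /H Hx1; apply/H; apply: IM.
- by exists d; split => // x1 /H; apply: Hd.
Qed.

Lemma frac_int_elt I : frac_ideal I -> exists2 a : R, a != 0 & I (emb a).
Proof.
move=> [[x [Hx x0]] _ _ IM [d [d0 Hd]]].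
have [a Ha] := Hd x Hx; exists a; last by rewrite -Ha; apply: IM.
by rewrite -emb_eq0 -Ha mulf_neq0 // emb_eq0.
Qed.

Lemma frac_pid x : x != 0 -> frac_ideal (pid x).
Proof.
move=> x0; split.
- by exists x; split => //; exists 1; rewrite emb1 mul1r.
- by exists 0; rewrite emb0 mul0r.
- by move=> a b [r ->] [s ->]; exists (r + s); rewrite embD mulrDl.
- by move=> r a [s ->]; exists (r * s); rewrite embM mulrA.
- have [u [v [v0 Hv]]] := tofrac_clear_denom x.
  exists v; split => // a [r ->]; rewrite mulrCA Hv; exact/D_mul/D_emb/D_emb.
Qed.

Lemma frac_pid_neq0 x : frac_ideal (pid x) -> x != 0.
Proof.
by move=> [[y [[r ->] y0]] _ _ _ _]; apply: contraNneq y0 => ->; rewrite mulr0.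
Qed.

Lemma frac_D : frac_ideal Dset.
Proof. exact: frac_seteq (frac_pid (oner_neq0 K)) (seteq_sym D_pid1). Qed.

Lemma frac_scale c I : c != 0 -> frac_ideal I -> frac_ideal (scale c I).
Proof.
move=> c0 [[x [Hx x0]] I0 ID IM [d [d0 Hd]]]; split.
- by exists (c * x); split; [exists x | rewrite mulf_neq0].
- by exists 0; rewrite mulr0.
- move=> a b [z [Hz ->]] [w [Hw ->]]; exists (z + w).
  by split; [apply: ID | rewrite mulrDr].
- by move=> r a [z [Hz ->]]; exists (emb r * z); split; [apply: IM | rewrite mulrCA].
- have [u [v [v0 Hv]]] := tofrac_clear_denom c.
  exists (v * d); split; first by rewrite mulf_neq0.
  move=> a [z [Hz ->]]; rewrite embM mulrACA Hv.
  by apply: D_mul; [apply: D_emb | apply: Hd].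
Qed.

Lemma frac_finv I : frac_ideal I -> frac_ideal (Defs.finv I).
Proof.
move=> fI; have [a a0 Ia] := frac_int_elt fI.
case: fI => _ _ _ _ [d [d0 Hd]]; split.
- by exists (emb d); split; [exact: Hd | rewrite emb_eq0].
- by move=> y _; rewrite mul0r; exact: D_0.
- by move=> x y Hx Hy z Hz; rewrite mulrDl; apply: D_add; [apply: Hx | apply: Hy].
- by move=> r x Hx z Hz; rewrite -mulrA; apply: D_mul; [apply: D_emb | apply: Hx].
- exists a; split => // x Hx; rewrite mulrC; exact: Hx.
Qed.

Lemma frac_prod I J : frac_ideal I -> frac_ideal J -> frac_ideal (prod I J).
Proof.
move=> [[x [Hx x0]] _ _ IM [d [d0 Hd]]] [[x' [Hx' x0']] _ _ _ [d' [d0' Hd']]].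
split.
- by exists (x * x'); split; [apply: prod_mem | rewrite mulf_neq0].
- exact: prod_0.
- exact: prod_add.
- move=> r; apply: (prod_min (S := fun y => prod I J (emb r * y))).
  + by rewrite mulr0; exact: prod_0.
  + by move=> u v Hu Hv; rewrite mulrDr; apply: prod_add.
  + by move=> a b Ha Hb; rewrite mulrA; apply: prod_mem => //; apply: IM.
- exists (d * d'); split; first by rewrite mulf_neq0.
  apply: (prod_min (S := fun y => Dset (emb (d * d') * y))).
  + by rewrite mulr0; exact: D_0.
  + by move=> u v Hu Hv; rewrite mulrDr; apply: D_add.
  + move=> a b Ha Hb; rewrite embM mulrACA.
    by apply: D_mul; [apply: Hd | apply: Hd'].
Qed.

Lemma frac_prodl (l : seq (kset R)) : Defs.allP (@frac_ideal R) l -> frac_ideal (prodl l).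
Proof.
elim: l => [_|J l IH [HJ Hl]] /=; first exact: frac_D.
exact: frac_prod HJ (IH Hl).
Qed.

Lemma principal_unscale c I : c != 0 -> principal (scale c I) -> principal I.
Proof.
move=> c0 [w [w0 Hw]]; exists (c^-1 * w); split; first by rewrite mulf_neq0 ?invr_eq0.
apply: seteq_trans (seteq_sym (scaleK _ c0)) _.
exact: seteq_trans (scale_seteq _ Hw) (scale_pid _ _).
Qed.

Lemma principal_of_field I : (forall c : R, c != 0 -> c \is a GRing.unit) ->
  frac_ideal I -> principal I.
Proof.
move=> Hfield fI; have [a a0 Ia] := frac_int_elt fI.
have Dall y : Dset y.
  have [u [v [v0 Hv]]] := tofrac_clear_denom y.
  exists (v^-1 * u); rewrite embM /Defs.emb rmorphV ?Hfield //.
  by rewrite -[FracField.tofrac u]Hv mulKf // tofrac_eq0.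
exists 1; split; first exact: oner_neq0.
move=> y; split=> [_|_]; first by have [r ->] := Dall y; exists r; rewrite mulr1.
have ea0 : emb a != 0 by rewrite emb_eq0.
have [r Hr] := Dall (y / emb a); rewrite -[y](mulfVK ea0) Hr.
by case: fI => _ _ _ IM _; apply: IM.
Qed.

Lemma pid_associate (x p : R) : x != 0 -> seteq (pid (emb x)) (pid (emb p)) ->
  exists2 u : R, u \is a GRing.unit & x = u * p.
Proof.
move=> x0 Hxp.
have [u Hu] : pid (emb p) (emb x) by apply/Hxp; exists 1; rewrite emb1 mul1r.
have [s Hs] : pid (emb x) (emb p) by apply/Hxp; exists 1; rewrite emb1 mul1r.
rewrite -embM in Hu; rewrite -embM in Hs.
have {}Hu := emb_inj Hu; have {}Hs := emb_inj Hs.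
exists u => //; apply/unitrPr; exists s.
by apply: (mulIf x0); rewrite mul1r -mulrA -Hs -Hu.
Qed.

Lemma pid_mul_unit (u y : R) : u \is a GRing.unit ->
  seteq (pid (emb (u * y))) (pid (emb y)).
Proof.
move=> uU z; split; first by move=> [s ->]; exists (s * u); rewrite !embM mulrA.
move=> [s ->]; exists (s * u^-1); rewrite -!embM; congr (emb _).
by rewrite mulrA mulrVK.
Qed.

End FractionalIdeals.
Arguments frac_D {R}.
Arguments D_pid1 {R}.

Lemma prod_nonunit_cons (R : idomainType) (l : seq R) :
  \prod_(y <- l) y \isn't a GRing.unit -> exists y l', l = y :: l'.
Proof. by case: l => [|y l']; [rewrite big_nil unitr1 | exists y, l']. Qed.

Section StarOperation.
Variable R : idomainType.
Local Notation K := {fraction R}.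
Local Notation emb := (@emb R).
Local Notation Dset := (@Dset R).
Variable st : kset R -> kset R.
Hypothesis Hst : star_operation st.
Implicit Types (I J A : kset R) (x c : K).

Lemma st_cong I J : frac_ideal I -> seteq I J -> seteq (st I) (st J).
Proof. by case: Hst => H _; apply: H. Qed.
Lemma st_pid x : x != 0 -> seteq (st (pid x)) (pid x).
Proof. by case: Hst => _ [_ [H _]]; apply: H. Qed.
Lemma st_scale x I : x != 0 -> frac_ideal I -> seteq (st (scale x I)) (scale x (st I)).
Proof. by case: Hst => _ [_ [_ [H _]]]; apply: H. Qed.
Lemma st_ext I : frac_ideal I -> subs I (st I).
Proof. by case: Hst => _ [_ [_ [_ [H _]]]]; apply: H. Qed.
Lemma st_mono I J : frac_ideal I -> frac_ideal J -> subs I J -> subs (st I) (st J).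
Proof. by case: Hst => _ [_ [_ [_ [_ [H _]]]]]; apply: H. Qed.

Lemma st_D : seteq (st Dset) Dset.
Proof.
apply: seteq_trans (st_cong frac_D D_pid1) _.
exact: seteq_trans (st_pid (oner_neq0 K)) (seteq_sym D_pid1).
Qed.

Lemma star_ideal_scale c I : c != 0 -> star_ideal st I -> star_ideal st (scale c I).
Proof.
move=> c0 [fI sI]; split; first exact: frac_scale.
exact: seteq_trans (st_scale c0 fI) (scale_seteq _ sI).
Qed.

Lemma star_invertible_scale c I : c != 0 -> star_invertible st I ->
  star_invertible st (scale c I).
Proof.
move=> c0 [fI Hi]; have fcI := frac_scale c0 fI; split => //.
apply: seteq_trans Hi; apply: st_cong; first exact: frac_prod (frac_finv fcI).
apply: seteq_trans (prod_seteq (seteq_refl _) (finv_scale _ c0)) _.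
apply: seteq_trans (prod_scalel _ _ _) _.
apply: seteq_trans (scale_seteq _ (prod_scaler _ _ _)) _.
by apply: seteq_trans (scale_scale _ _ _) _; rewrite mulfV //; exact: scale1.
Qed.

Lemma star_invertible_pid x : x != 0 -> star_invertible st (pid x).
Proof.
move=> x0; have fx := frac_pid x0; split => //.
have fxi : frac_ideal (pid x^-1) by apply: frac_pid; rewrite invr_eq0.
apply: seteq_trans (st_cong (frac_prod fx (frac_finv fx))
  (prod_seteq (seteq_refl _) (finv_pid x0))) _.
apply: seteq_trans (st_cong (frac_prod fx fxi) (prod_pid x x^-1)) _.
rewrite mulfV //; exact: seteq_trans (st_pid (oner_neq0 K)) (seteq_sym D_pid1).
Qed.

(* If (IQ)^* = xD then x^-1 Q lies in I^-1, so (I I^-1)^* contains (x^-1 I Q)^* = D. *)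
Lemma star_invertible_of_prod I Q x : frac_ideal I -> frac_ideal Q -> x != 0 ->
  seteq (st (prod I Q)) (pid x) -> star_invertible st I.
Proof.
move=> fI fQ x0 H; split => //.
have xi0 : x^-1 != 0 by rewrite invr_eq0.
have fIQ := frac_prod fI fQ.
have fIi := frac_prod fI (frac_finv fI).
have fIF := frac_prod fI (frac_scale xi0 fQ).
apply: subs_antisym => [y Hy|].
  by apply/st_D; apply: st_mono Hy => //; [exact: frac_D | exact: prod_finv_subD].
have subQ : subs (scale x^-1 Q) (Defs.finv I).
  move=> y [q [Hq ->]] z Hz.
  have /H [r Hr] : st (prod I Q) (z * q) by apply: st_ext => //; apply: prod_mem.
  by exists r; rewrite -mulrA [q * z]mulrC Hr mulrCA mulVf // mulr1.
move=> y [r ->]; apply: (st_mono fIF fIi (prod_mono (fun _ => id) subQ)).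
apply/(st_cong fIF (prod_scaler I Q x^-1)); apply/(st_scale xi0 fIQ).
exists (emb r * x); split; first by apply/H; exists r.
by rewrite mulrCA mulVf // mulr1.
Qed.

Lemma star_invertible_factors (l : seq (kset R)) A x : x != 0 -> frac_ideal A ->
  Defs.allP (@frac_ideal R) l -> seteq (st (prod A (prodl l))) (pid x) ->
  Defs.allP (star_invertible st) l.
Proof.
elim: l A => [//|J l IH] A x0 fA /= [fJ fl] H.
have fAJl : frac_ideal (prod A (prod J (prodl l))).
  exact/frac_prod/frac_prod/frac_prodl.
split.
  apply: (star_invertible_of_prod (Q := prod A (prodl l)) fJ _ x0).
    exact/frac_prod/frac_prodl.
  exact: seteq_trans (seteq_sym (st_cong fAJl (prodCA _ _ _))) H.
apply: (IH (prod A J) x0 (frac_prod fA fJ) fl).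
exact: seteq_trans (seteq_sym (st_cong fAJl (prodA _ _ _))) H.
Qed.

Lemma pifst_seteq I J : seteq I J -> pifst st I -> pifst st J.
Proof.
move=> H [Hp [Hi [[fI sI] [J0 [HJ0 HI0]]]]].
have fJ := frac_seteq fI H.
split; first by move=> /H.
split; first by move=> y /H /Hi.
split; first by split=> //; exact: seteq_trans (seteq_sym (st_cong fI H)) (seteq_trans sI H).
by exists J0; split => //; exact: seteq_trans (seteq_sym H) HI0.
Qed.

Lemma star_homog_seteq I J : seteq I J -> star_homog st I -> star_homog st J.
Proof.
move=> H [HI Hh]; split; first exact: pifst_seteq HI.
by move=> A B HA HB sA sB; apply: Hh => // y /H; [exact: sA | exact: sB].
Qed.

Lemma star_homog_frac I : star_homog st I -> frac_ideal I.
Proof. by move=> [[_ [_ [[fI _] _]]] _]. Qed.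

(* The wf condition on y, applied to p^-1 I which contains yD. *)
Lemma principal_of_wf_factor I (y p : R) : star_ideal st I -> star_invertible st I ->
  star_wf_homog_elt st y -> y != 0 -> p != 0 -> I (emb (y * p)) -> principal I.
Proof.
move=> sI iI [_ wfy] y0 p0 Iyp.
have epi0 : (emb p)^-1 != 0 by rewrite invr_eq0 emb_eq0.
apply: (principal_unscale epi0).
apply: (wfy (star_invertible_pid _)); rewrite ?emb_eq0 //.
- exact: star_ideal_scale.
- exact: star_invertible_scale.
- move=> z [r ->]; exists (emb r * emb (y * p)); split.
    by case: sI => -[_ _ _ IM _] _; apply: IM.
  by rewrite embM [emb y * _]mulrC (mulrCA (emb r)) mulKf // emb_eq0.
Qed.

Lemma star_wf_SH_trivial_class_group : star_wf_SH st -> trivial_star_class_group st.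
Proof.
move=> Hwf I sI iI; have [a a0 Ia] := frac_int_elt sI.1.
have [[c [c0 cU]]|Hnone] := classic (exists c : R, c != 0 /\ c \isn't a GRing.unit);
  last first.
  apply: principal_of_field sI.1 => c c0; apply: NNPP => cU.
  by apply: Hnone; exists c; split => //; apply/negP.
have ac0 : a * c != 0 by rewrite mulf_neq0.
have acU : a * c \isn't a GRing.unit by rewrite unitrM negb_and cU orbT.
have [l [Hl Hac]] := Hwf _ ac0 acU.
have [y [l' El]] : exists y l', l = y :: l' by apply: prod_nonunit_cons; rewrite -Hac.
rewrite El big_cons in Hac; rewrite El /= in Hl; case: Hl => wfy _.
have [y0 p0] : y != 0 /\ \prod_(z <- l') z != 0
  by apply/andP; rewrite -negb_or -mulf_eq0 -Hac.
apply: (principal_of_wf_factor sI iI wfy y0 p0).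
by rewrite -Hac embM mulrC; case: sI => -[_ _ _ IM _] _; apply: IM.
Qed.

Lemma star_wf_SH_star_SH : star_wf_SH st -> star_SH st.
Proof.
move=> Hwf x x0 xU; have [l [Hl Ex]] := Hwf x x0 xU.
exists (map (fun y => pid (emb y)) l); split.
  by elim: l {Ex} Hl => [//|y l IH] /= [[Hy _] Hl]; split; last exact: IH.
have ex0 : emb x != 0 by rewrite emb_eq0.
apply: seteq_trans (seteq_sym (st_pid ex0)) _.
by apply: st_cong; [exact: frac_pid | rewrite Ex; exact/seteq_sym/prodl_pid].
Qed.

Lemma star_wf_homog_elt_of_homog (y : R) : trivial_star_class_group st ->
  star_homog st (pid (emb y)) -> star_wf_homog_elt st y.
Proof. by move=> Cl0 Hy; split => // _ J sJ iJ _; exact: Cl0. Qed.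

Lemma homog_factors_principal (l : seq (kset R)) : trivial_star_class_group st ->
  Defs.allP (star_homog st) l -> Defs.allP (star_invertible st) l ->
  exists l' : seq R, Defs.allP (fun y => star_homog st (pid (emb y))) l' /\
    seteq (prodl l) (pid (emb (\prod_(y <- l') y))).
Proof.
move=> Cl0; elim: l => [|J l IH] /= => [_ _|[HJ Hl] [iJ il]].
  by exists [::]; rewrite big_nil emb1; split => //; exact: D_pid1.
have [l' [Hl' Hp]] := IH Hl il.
have [[_ [intJ [sJ _]]] _] := HJ.
have [w [w0 Hw]] := Cl0 J sJ iJ.
have [y Ey] : Dset w by apply: intJ; apply/Hw; exists 1; rewrite emb1 mul1r.
rewrite Ey in Hw; exists (y :: l'); split; first by split => //; exact: star_homog_seteq Hw HJ.
rewrite big_cons embM; exact: seteq_trans (prod_seteq Hw Hp) (prod_pid _ _).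
Qed.

Lemma star_SH_trivial_class_group_wf_SH :
  star_SH st -> trivial_star_class_group st -> star_wf_SH st.
Proof.
move=> HSH Cl0 x x0 xU; have [l [Hl Hx]] := HSH x x0 xU.
have fl : Defs.allP (@frac_ideal R) l.
  exact: allP_sub star_homog_frac Hl.
have fP := frac_prodl fl.
have il : Defs.allP (star_invertible st) l.
  apply: (star_invertible_factors (A := Dset) _ frac_D fl (x := emb x)).
    by rewrite emb_eq0.
  exact: seteq_trans (st_cong (frac_prod frac_D fP) (prod_D fP)) (seteq_sym Hx).
have [l' [Hl' Hp]] := homog_factors_principal Cl0 Hl il.
have [u uU Exu] : exists2 u : R, u \is a GRing.unit & x = u * \prod_(y <- l') y.
  apply: pid_associate x0 (seteq_trans Hx (seteq_trans (st_cong fP Hp) _)).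
  exact/st_pid/frac_pid_neq0/(frac_seteq fP Hp).
have [y [L El]] : exists y L, l' = y :: L.
  by apply: prod_nonunit_cons; apply: contra xU => pU; rewrite Exu unitrM uU.
rewrite El /= in Hl'; case: Hl' => Hy HL.
exists (u * y :: L); split; last by rewrite Exu El !big_cons mulrA.
split.
  apply: star_wf_homog_elt_of_homog Cl0 _.
  exact: star_homog_seteq (seteq_sym (pid_mul_unit y uU)) Hy.
by apply: allP_sub HL => z; apply: star_wf_homog_elt_of_homog.
Qed.

End StarOperation.

Theorem mainTheorem17 (R : idomainType) (st : kset R -> kset R) :
  star_operation st -> finite_character st ->
  (star_wf_SH st <-> star_SH st /\ trivial_star_class_group st).
Proof.
move=> Hst _; split => [Hwf|[HSH Cl0]].
  by split; [exact: star_wf_SH_star_SH | exact: star_wf_SH_trivial_class_group].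
exact: star_SH_trivial_class_group_wf_SH.
Qed.
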